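(* If $f:S\to T$ and $g:T\to U$ are non-degenerate nested tuple morphisms, then $L_{g\circ f}=L_g\circ L_f$.
   Context: A nested tuple (of positive integers) is either a positive integer (depth $0$) or a finite tuple $(X_1,\dots,X_r)$ of nested tuples (depth $>0$, rank $r$, modes $X_i$). Its flattening $X^\flat$ is the tuple of integer leaves read left to right; $\mathrm{len}(X)$ is its length, $\mathrm{entry}_i(X)$ its $i$-th entry, $\mathrm{size}(X)$ the product of its entries. Congruent nested tuples have the same nesting pattern. $\langle n\rangle_*=\{*,1,\dots,n\}$. A layout is $L=S:D$ with $S,D$ congruent nested tuples ($S$ positive, $D$ nonnegative); $L^\flat=S^\flat:D^\flat$. For a flat layout $(s_1,\dots,s_m):(d_1,\dots,d_m)$ its layout function $\Phi:[0,\prod s_i)\to\mathbb{Z}$ is $\Phi(x)=\sum_i x_id_i$ with $x_i=\lfloor x/(s_1\cdots s_{i-1})\rfloor \bmod s_i$; for a layout, $\Phi_L=\Phi_{L^\flat}$ and $\mathrm{size}(L)=\mathrm{size}(S)$. A flat layout is coalesced if no $s_i=1$ and $s_id_i\ne d_{i+1}$ for $1\le i<m$. A layout $L$ is coalesced if $L=1:0$, or $L$ has depth $0$ with shape $>1$, or $L$ has depth $1$, rank $>1$ and is a coalesced flat layout. A nested tuple $X'$ refines $X$ if either $X$ is an integer equal to $\mathrm{size}(X')$, or both have depth $>0$, the same rank, and each mode of $X'$ refines the corresponding mode of $X$. If $S'$ refines $S$ then $S'$ is obtained from $S$ by replacing its $i$-th leaf by a nested tuple $S'_i$ of size $\mathrm{entry}_i(S)$;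 for a layout $L=S':D$ its $i$-th relative mode is $S'_i:D_i$ with $D_i$ the corresponding part of $D$. $L$ is coalesced over $S$ if every relative mode is coalesced. For layouts $A,B$, the composite $B\circ A$ is the unique layout $C$ such that $\mathrm{shape}(C)$ refines $\mathrm{shape}(A)$, $C$ is coalesced over $\mathrm{shape}(A)$, the image of $\Phi_A$ lies in $[0,\mathrm{size}(B))$, and $\Phi_C=\Phi_B\circ\Phi_A$. A nested tuple morphism $f:S\to T$ is given by a pointed map $\alpha:\langle\mathrm{len}(S)\rangle_*\to\langle\mathrm{len}(T)\rangle_*$ with each $j\ne*$ having at most one preimage and $\mathrm{entry}_i(S)=\mathrm{entry}_{\alpha(i)}(T)$ whenever $\alpha(i)\ne*$. Composition of $f$ (over $\alpha$) and $g$ (over $\beta$) lies over $\beta\circ\alpha$. With $T^\flat=(t_1,\dots,t_n)$, $L_f$ has shape $S$ and stride congruent to $S$ with $i$-th flattened entry $0$ if $\alpha(i)=*$, else $\prod_{j<\alpha(i)}t_j$. $f$ is non-degenerate if $\mathrm{entry}_i(S)=1$ implies $\alpha(i)=*$. *)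

From mathcomp Require Import all_boot.
Set Implicit Arguments. Unset Strict Implicit. Unset Printing Implicit Defensive.

(* Nested tuples: a leaf (depth 0) carrying a natural number, or a finite tuple
   of nested tuples.  Positivity of entries is imposed by the predicate
   [nt_pos] where needed. *)
Inductive ntuple : Type :=
| NLeaf of nat
| NNode of seq ntuple.

Fixpoint flat (X : ntuple) : seq nat :=
  match X with
  | NLeaf n => [:: n]
  | NNode l => flatten (map flat l)
  end.

Definition len (X : ntuple) : nat := size (flat X).
(* entry_i(X), 0-indexed: [entry i X] is the paper's entry_{i+1}(X). *)
Definition entry (i : nat) (X : ntuple) : nat := nth 0 (flat X) i.
Definition ntsize (X : ntuple) : nat := \prod_(x <- flat X) x.

Definition nt_pos (X : ntuple) : bool := all (fun n => 0 < n) (flat X).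

Fixpoint pattern (X : ntuple) : ntuple :=
  match X with
  | NLeaf _ => NLeaf 0
  | NNode l => NNode (map pattern l)
  end.

Definition congruent (X Y : ntuple) : Prop := pattern X = pattern Y.

Fixpoint refines (X' X : ntuple) {struct X} : Prop :=
  match X with
  | NLeaf n => ntsize X' = n
  | NNode l =>
      match X' with
      | NLeaf _ => False
      | NNode l' =>
          (fix go (l l' : seq ntuple) {struct l} : Prop :=
             match l, l' with
             | [::], [::] => True
             | a :: r, a' :: r' => refines a' a /\ go r r'
             | _, _ => False
             end) l l'
      end
  end.

(* If X' refines S, [rel_modes S X'] is the list (S'_1, ..., S'_n) of the
   nested tuples replacing the leaves of S (also used for a stride D
   congruent to X'). *)
Fixpoint rel_modes (S X : ntuple) {struct S} : seq ntuple :=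
  match S with
  | NLeaf _ => [:: X]
  | NNode l =>
      match X with
      | NLeaf _ => [::]
      | NNode l' =>
          (fix go (l l' : seq ntuple) {struct l} : seq ntuple :=
             match l, l' with
             | a :: r, a' :: r' => rel_modes a a' ++ go r r'
             | _, _ => [::]
             end) l l'
      end
  end.

Fixpoint fill (X : ntuple) (s : seq nat) : ntuple * seq nat :=
  match X with
  | NLeaf _ => (NLeaf (head 0 s), behead s)
  | NNode l =>
      let: (l', r) :=
        (fix go (l : seq ntuple) (s : seq nat) : seq ntuple * seq nat :=
           match l with
           | [::] => ([::], s)
           | a :: l1 =>
               let: (a', s1) := fill a s in
               let: (l2, s2) := go l1 s1 in (a' :: l2, s2)
           end) l s
      in (NNode l', r)
  end.

Definition layout := (ntuple * ntuple)%type.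
Definition shape (L : layout) : ntuple := L.1.
Definition stride (L : layout) : ntuple := L.2.

Definition is_layout (L : layout) : Prop :=
  congruent (shape L) (stride L) /\ nt_pos (shape L).

Definition lsize (L : layout) : nat := ntsize (shape L).

(* Layout function of a flat layout (s_1..s_m):(d_1..d_m), 0-indexed. *)
Definition flat_fun (s d : seq nat) (x : nat) : nat :=
  \sum_(i < size s) ((x %/ \prod_(j < i) nth 1 s j) %% nth 1 s i) * nth 0 d i.

Definition Phi (L : layout) : nat -> nat := flat_fun (flat (shape L)) (flat (stride L)).

Definition coalesced_flat (s d : seq nat) : bool :=
  all (fun n => n != 1) s &&
  all (fun i => nth 0 s i * nth 0 d i != nth 0 d i.+1) (iota 0 (size s).-1).

Definition is_leaf (X : ntuple) : bool :=
  if X is NLeaf _ then true else false.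

Definition coalesced (L : layout) : Prop :=
  (shape L = NLeaf 1 /\ stride L = NLeaf 0)
  \/ (exists n, shape L = NLeaf n /\ 1 < n)
  \/ (exists l, shape L = NNode l /\ all is_leaf l /\ 1 < size l
               /\ coalesced_flat (flat (shape L)) (flat (stride L))).

Definition coalesced_over (L : layout) (S : ntuple) : Prop :=
  forall i, i < len S ->
    coalesced (nth (NLeaf 0) (rel_modes S (shape L)) i,
               nth (NLeaf 0) (rel_modes S (stride L)) i).

(* [is_composite B A C] : C is the composite B o A, i.e. C is a layout
   satisfying the characterizing properties of the composite (which is
   defined in the paper as the unique such layout). *)
Definition is_composite (B A C : layout) : Prop :=
  [/\ is_layout C,
      refines (shape C) (shape A),
      coalesced_over C (shape A),
      (forall x, x < lsize A -> Phi A x < lsize B)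
    & (forall x, x < lsize A -> Phi C x = Phi B (Phi A x))].

(* Nested tuple morphisms f : S -> T over alpha : <len S>_pt -> <len T>_pt;
   the pointed sets are modeled as option 'I_n with None standing for the base point, 0-indexed. *)
Definition nt_morphism (S T : ntuple) (a : 'I_(len S) -> option 'I_(len T)) : Prop :=
  (forall i i' j, a i = Some j -> a i' = Some j -> i = i')
  /\ (forall i j, a i = Some j -> entry i S = entry j T).

Definition non_degenerate (S T : ntuple) (a : 'I_(len S) -> option 'I_(len T)) : Prop :=
  forall i : 'I_(len S), entry i S = 1 -> a i = None.

Definition mcomp (S T U : ntuple) (a : 'I_(len S) -> option 'I_(len T))
  (b : 'I_(len T) -> option 'I_(len U)) : 'I_(len S) -> option 'I_(len U) :=
  fun i => obind b (a i).

Definition morph_stride_entry (S T : ntuple) (a : 'I_(len S) -> option 'I_(len T))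
  (i : 'I_(len S)) : nat :=
  match a i with
  | None => 0
  | Some j => \prod_(k < j) nth 1 (flat T) k
  end.

Definition Lmorph (S T : ntuple) (a : 'I_(len S) -> option 'I_(len T)) : layout :=
  (S, (fill S [seq morph_stride_entry a i | i <- enum 'I_(len S)]).1).

From mathcomp Require Import all_boot.
From Stdlib Require List.
Set Implicit Arguments. Unset Strict Implicit. Unset Printing Implicit Defensive.

(* Read x in the mixed radix of flat S.  The layout function of L_f places the
   i-th digit of x at weight prod_{j < alpha(i)} t_j, so Phi_{L_f}(x) is the
   number whose T-digits are the digits of x transported along alpha; they are
   genuine digits because alpha is injective and preserves entries.  Applying
   L_g transports them once more, along beta, which is Phi_{L_{g o f}}(x).
   Since shape L_{g o f} = S, coalescence over S only concerns single leaves,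
   and a leaf of size 1 gets stride 0 by non-degeneracy of f. *)

Section MixedRadix.

Variable t : seq nat.

Definition weight (j : nat) : nat := \prod_(k < j) nth 1 t k.

Definition digit (x j : nat) : nat := x %/ weight j %% nth 1 t j.

Hypothesis t_pos : all (fun n => 0 < n) t.

Lemma nth_radix_gt0 k : 0 < nth 1 t k.
Proof.
have [kt|] := ltnP k (size t); last by move/(nth_default 1)->.
exact: allP t_pos _ (mem_nth 1 kt).
Qed.

Lemma weight_gt0 j : 0 < weight j.
Proof. by apply: prodn_gt0 => k; apply: nth_radix_gt0. Qed.

Lemma weightS j : weight j.+1 = weight j * nth 1 t j.
Proof. by rewrite /weight big_ord_recr. Qed.

Lemma weight_dvd j k : j <= k -> weight j %| weight k.
Proof.
elim: k => [|k IHk]; first by rewrite leqn0 => /eqP->.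
rewrite leq_eqVlt => /predU1P[->|/IHk jk] //.
by rewrite weightS dvdn_mulr.
Qed.

Lemma mixed_radix_lt n (c : nat -> nat) :
  (forall k, k < n -> c k < nth 1 t k) ->
  \sum_(0 <= k < n) c k * weight k < weight n.
Proof.
elim: n => [|n IHn] c_lt; first by rewrite big_geq ?weight_gt0.
rewrite big_nat_recr //= weightS.
have lt_n : \sum_(0 <= k < n) c k * weight k < weight n.
  by apply: IHn => k /ltnW; apply: c_lt.
apply: (@leq_trans (weight n + c n * weight n)); first by rewrite ltn_add2r.
by rewrite -mulSn mulnC leq_mul2l c_lt ?orbT.
Qed.

Lemma digit_mixed_radix n (c : nat -> nat) j :
  (forall k, k < n -> c k < nth 1 t k) -> j < n ->
  digit (\sum_(0 <= k < n) c k * weight k) j = c j.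
Proof.
move=> c_lt jn; rewrite (big_cat_nat _ (n := j.+1)) //= big_nat_recr //=.
set low := \sum_(0 <= k < j) _; set high := \sum_(j.+1 <= k < n) _.
have low_lt : low < weight j.
  by apply: mixed_radix_lt => k kj; apply/c_lt/(ltn_trans kj).
have high_dvd : weight j.+1 %| high.
  rewrite /high big_seq_cond; apply: dvdn_sum => k /andP[+ _].
  by rewrite mem_index_iota => /andP[jk _]; apply/dvdn_mull/weight_dvd.
rewrite -(divnK high_dvd) weightS /digit.
set q := high %/ _.
have -> : low + c j * weight j + q * (weight j * nth 1 t j)
          = (c j + q * nth 1 t j) * weight j + low.
  by rewrite mulnDl -mulnA (mulnC (nth 1 t j)) -addnA addnC.
rewrite divnMDl ?weight_gt0 // divn_small // addn0 addnC modnMDl.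
by rewrite modn_small ?c_lt.
Qed.

End MixedRadix.

Lemma ntsize_weight X : ntsize X = weight (flat X) (len X).
Proof. by rewrite /ntsize (big_nth 1) big_mkord. Qed.

Section Pushforward.

Variables (n m : nat) (a : 'I_n -> option 'I_m).

Definition pushforward (c : 'I_n -> nat) (k : nat) : nat :=
  \sum_(i < n | omap val (a i) == Some k) c i.

Lemma sum_pushforward (c : 'I_n -> nat) (w : 'I_m -> nat) :
  \sum_(i < n) c i * oapp w 0 (a i) = \sum_(j < m) pushforward c j * w j.
Proof.
under [RHS]eq_bigr do rewrite big_distrl /= big_mkcond.
rewrite exchange_big /=; apply: eq_bigr => i _.
case: (a i) => [j|] /=; last by rewrite muln0 big1.
rewrite (bigD1 j) //= eqxx big1 ?addn0 // => k.
by move=> /negbTE kj; rewrite (inj_eq Some_inj) val_eqE eq_sym kj.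
Qed.

End Pushforward.

Definition ntuple_nested_ind (P : ntuple -> Prop) (HL : forall n, P (NLeaf n))
  (HN : forall l, List.Forall P l -> P (NNode l)) : forall X, P X :=
  fix F X := match X return P X with
  | NLeaf n => HL n
  | NNode l => HN l ((fix G (l : seq ntuple) : List.Forall P l :=
       match l with
       | [::] => List.Forall_nil P
       | Y :: r => @List.Forall_cons _ P Y r (F Y) (G r)
       end) l)
  end.

Lemma len_node l : len (NNode l) = sumn (map len l).
Proof. by rewrite /len /= size_flatten /seq.shape -map_comp. Qed.

Lemma refines_refl X : refines X X.
Proof.
elim/ntuple_nested_ind: X => [n|l Hl] /=; first by rewrite /ntsize /= big_seq1.
by elim: Hl => [|Y r HY _ IHr] //=.
Qed.

Lemma rel_modes_congruent S X :
  congruent S X -> rel_modes S X = map NLeaf (flat X).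
Proof.
rewrite /congruent; elim/ntuple_nested_ind: S X => [n|l Hl] [k|l'] //= [E].
elim: Hl l' E => [|Y r HY _ IHr] [|Y' r'] //= [EY Er].
by rewrite HY // IHr // map_cat.
Qed.

Fixpoint fill_list (l : seq ntuple) (s : seq nat) : seq ntuple * seq nat :=
  match l with
  | [::] => ([::], s)
  | Y :: l1 =>
      let: (Y', s1) := fill Y s in
      let: (l2, s2) := fill_list l1 s1 in (Y' :: l2, s2)
  end.

Lemma fill_node l s :
  fill (NNode l) s = let: (l', r) := fill_list l s in (NNode l', r).
Proof. by []. Qed.

Lemma mkseqD (f : nat -> nat) i j :
  mkseq f (i + j) = mkseq f i ++ mkseq (fun k => f (i + k)) j.
Proof.
by rewrite /mkseq iotaD map_cat -[in iota i j](addn0 i) iotaDl -map_comp.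
Qed.

Lemma fill_spec X s :
  flat (fill X s).1 = mkseq (nth 0 s) (len X) /\ (fill X s).2 = drop (len X) s.
Proof.
elim/ntuple_nested_ind: X s => [n|l Hl] s.
  by case: s => [|x s]; rewrite /= ?drop0.
rewrite fill_node len_node.
suff : flatten (map flat (fill_list l s).1) = mkseq (nth 0 s) (sumn (map len l))
       /\ (fill_list l s).2 = drop (sumn (map len l)) s.
  by case: (fill_list l s).
elim: Hl s => [|Y r HY _ IHr] s /=; first by rewrite drop0.
have [] := HY s; case: (fill Y s) => Y' s1 /= flatY' ->.
have [] := IHr (drop (len Y) s); case: fill_list => l2 s2 /= -> ->.
rewrite flatY' drop_drop mkseqD addnC; split=> //.
by congr (_ ++ _); apply: eq_mkseq => k; rewrite nth_drop.
Qed.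

Lemma flat_fill X s : size s = len X -> flat (fill X s).1 = s.
Proof. by case: (fill_spec X s) => -> _ <-; rewrite mkseq_nth. Qed.

Lemma fill_pattern X s : pattern (fill X s).1 = pattern X.
Proof.
elim/ntuple_nested_ind: X s => [n|l Hl] s //; rewrite fill_node.
suff : map pattern (fill_list l s).1 = map pattern l.
  by case: (fill_list l s) => l' r /= ->.
elim: Hl s => [|Y r HY _ IHr] s //=.
have := HY s; case: (fill Y s) => Y' s1 /= <-.
by have := IHr s1; case: (fill_list r s1) => l2 s2 /= ->.
Qed.

Lemma coalesced_leaf n d : 0 < n -> (n = 1 -> d = 0) -> coalesced (NLeaf n, NLeaf d).
Proof.
rewrite leq_eqVlt => /predU1P[<- /(_ erefl) ->|n_gt1 _]; first by left.
by right; left; exists n.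
Qed.

Section LayoutOfMorphism.

Variables (S T : ntuple) (a : 'I_(len S) -> option 'I_(len T)).

Lemma nth_stride_Lmorph (i : 'I_(len S)) :
  nth 0 (flat (stride (Lmorph a))) i = morph_stride_entry a i.
Proof.
rewrite flat_fill; last by rewrite size_map size_enum_ord.
by rewrite (nth_map i) ?size_enum_ord ?nth_ord_enum.
Qed.

Lemma Lmorph_is_layout : nt_pos S -> is_layout (Lmorph a).
Proof. by split; rewrite // /congruent fill_pattern. Qed.

Lemma Lmorph_coalesced_over :
  nt_pos S -> non_degenerate a -> coalesced_over (Lmorph a) S.
Proof.
move=> S_pos a_nondeg i iS.
have cong_stride : congruent S (stride (Lmorph a)) by case: (Lmorph_is_layout S_pos).
have size_stride : size (flat (stride (Lmorph a))) = len S.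
  by rewrite flat_fill size_map size_enum_ord.
rewrite /= !rel_modes_congruent //= !(nth_map 0) ?size_stride //.
rewrite (nth_stride_Lmorph (Ordinal iS)).
apply: coalesced_leaf => [|S_i1]; first exact: allP S_pos _ (mem_nth 0 iS).
by rewrite /morph_stride_entry (a_nondeg (Ordinal iS)).
Qed.

Lemma Phi_LmorphE x :
  Phi (Lmorph a) x = \sum_(i < len S) digit (flat S) x i * morph_stride_entry a i.
Proof. by apply: eq_bigr => i _; rewrite nth_stride_Lmorph. Qed.

Lemma Phi_Lmorph_pushforward x :
  Phi (Lmorph a) x
  = \sum_(0 <= k < len T) pushforward a (digit (flat S) x) k * weight (flat T) k.
Proof. by rewrite Phi_LmorphE (sum_pushforward _ _ (fun j => weight _ j)) big_mkord. Qed.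

End LayoutOfMorphism.

Section MorphismDigits.

Variables (S T : ntuple) (a : 'I_(len S) -> option 'I_(len T)).
Hypotheses (S_pos : nt_pos S) (T_pos : nt_pos T) (a_morph : nt_morphism a).

Lemma pushforward_digit_lt x k : pushforward a (digit (flat S) x) k < nth 1 (flat T) k.
Proof.
have [a_inj a_entry] := a_morph; rewrite /pushforward.
have [i0 /eqP ai0|no_fibre] := pickP (fun i => omap val (a i) == Some k); last first.
  by rewrite big1 ?nth_radix_gt0 // => i; rewrite no_fibre.
case E: (a i0) ai0 => [j0|] //= [<-].
rewrite (bigD1 i0) ?E //= big1 ?addn0 => [|i /andP[]]; last first.
  case Ei: (a i) => [j|] //= /eqP[/val_inj jj0]; apply: contraNeq => _.
  by rewrite (a_inj i i0 j0) // Ei jj0.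
have -> : nth 1 (flat T) j0 = nth 1 (flat S) i0.
  rewrite (set_nth_default 0) // (set_nth_default 0 1 (ltn_ord i0)).
  exact/esym/a_entry.
by rewrite ltn_mod nth_radix_gt0.
Qed.

Lemma Phi_Lmorph_lt x : Phi (Lmorph a) x < ntsize T.
Proof.
by rewrite Phi_Lmorph_pushforward ntsize_weight mixed_radix_lt // => k _;
  apply: pushforward_digit_lt.
Qed.

Lemma digit_Phi_Lmorph x k : k < len T ->
  digit (flat T) (Phi (Lmorph a) x) k = pushforward a (digit (flat S) x) k.
Proof.
by rewrite Phi_Lmorph_pushforward => kT; apply: digit_mixed_radix => // j _;
  apply: pushforward_digit_lt.
Qed.

Lemma Phi_Lmorph_mcomp U (b : 'I_(len T) -> option 'I_(len U)) x :
  Phi (Lmorph (mcomp a b)) x = Phi (Lmorph b) (Phi (Lmorph a) x).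
Proof.
rewrite [RHS]Phi_LmorphE; under [RHS]eq_bigr => j _ do rewrite digit_Phi_Lmorph //.
rewrite -sum_pushforward Phi_LmorphE; apply: eq_bigr => i _.
by rewrite /morph_stride_entry /mcomp; case: (a i).
Qed.

End MorphismDigits.

Lemma non_degenerate_mcomp S T U (a : 'I_(len S) -> option 'I_(len T))
  (b : 'I_(len T) -> option 'I_(len U)) :
  non_degenerate a -> non_degenerate (mcomp a b).
Proof. by move=> a_nondeg i /a_nondeg; rewrite /mcomp => ->. Qed.

Theorem mainTheorem2 (S T U : ntuple)
  (a : 'I_(len S) -> option 'I_(len T)) (b : 'I_(len T) -> option 'I_(len U)) :
  nt_pos S -> nt_pos T -> nt_pos U ->
  nt_morphism a -> nt_morphism b ->
  non_degenerate a -> non_degenerate b ->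
  is_composite (Lmorph b) (Lmorph a) (Lmorph (mcomp a b)).
Proof.
move=> S_pos T_pos _ a_morph _ a_nondeg _; split.
- exact: Lmorph_is_layout.
- exact: refines_refl.
- exact/Lmorph_coalesced_over/non_degenerate_mcomp.
- by move=> x _; apply: Phi_Lmorph_lt.
- by move=> x _; apply: Phi_Lmorph_mcomp.
Qed.
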